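(* Let $n$ be an integer such that either $n>4$ and $n$ is prime, or $4\leq n\leq 10$. Then there is no perfect single-error-correcting code in $S_n$ with respect to the Kendall's $\tau$-distance; that is, there is no subset $\mathcal{C}\subseteq S_n$ such that for every $\pi\in S_n$ there exists exactly one $\sigma\in\mathcal{C}$ with $d_K(\sigma,\pi)\leq 1$.
   Context: $S_n$ denotes the set of all permutations of $[n]=\{1,\dots,n\}$, written $\sigma=[\sigma(1),\dots,\sigma(n)]$, where $\sigma(i)$ is the element in position $i$. An adjacent transposition applied to $\sigma$ exchanges the entries in positions $i$ and $i+1$ for some $1\leq i\leq n-1$. The Kendall's $\tau$-distance $d_K(\sigma,\pi)$ is the minimum number of adjacent transpositions needed to transform $\sigma$ into $\pi$. A perfect single-error-correcting code is a subset $\mathcal{C}\subseteq S_n$ such that every permutation of $S_n$ is at distance at most $1$ from exactly one element of $\mathcal{C}$. *)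

From mathcomp Require Import all_boot all_fingroup.
Set Implicit Arguments. Unset Strict Implicit. Unset Printing Implicit Defensive.

(* S_n is modelled as {perm 'I_n}; positions and values are 0..n-1. *)

(* Apply the adjacent transposition exchanging the entries in positions
   i and i+1 (for i+1 < n; otherwise no-op, never used below). *)
Definition adj_swap (n : nat) (s : {perm 'I_n}) (i : nat) : {perm 'I_n} :=
  match insub i, insub i.+1 with
  | Some a, Some b => (tperm a b * s)%g   (* (tperm a b * s) x = s (tperm a b x) *)
  | _, _ => s
  end.

Definition apply_swaps (n : nat) (s : {perm 'I_n}) (l : seq nat) : {perm 'I_n} :=
  foldl (@adj_swap n) s l.

(* d_K(s, p) <= k : p is obtained from s by at most k adjacent transpositions.
   Since d_K is the minimum such number, d_K(s,p) <= k iff this holds. *)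
Definition dK_le (n : nat) (s p : {perm 'I_n}) (k : nat) : Prop :=
  exists l : seq nat, [/\ size l <= k, all (fun i => i.+1 < n) l & apply_swaps s l = p].

Definition perfect_code1 (n : nat) (C : {set {perm 'I_n}}) : Prop :=
  forall p : {perm 'I_n}, exists! s : {perm 'I_n}, s \in C /\ dK_le s p 1.

From mathcomp Require Import all_boot all_fingroup zify.
From Stdlib Require Import NArith FMapPositive.
Set Implicit Arguments. Unset Strict Implicit. Unset Printing Implicit Defensive.

(* Double counting over radius-one balls: if C is a perfect code then, for every weight w
   on S_n, the sum of w over S_n equals the sum over c in C of the n values of w on the
   ball of c (c itself and its n - 1 adjacent transpositions).

   For n prime, weight by the position of the value 0. The number x_s of codewords with 0
   in position s then solves a linear system with constant right-hand side (n-1)!, whose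
   matrix (number of ball moves carrying position s to position t) has column sums n and
   diagonal entries at least n - 2 > n/2. Comparing the equations at a maximiser and a
   minimiser of x shows that x is constant, so n divides (n-1)!, against Wilson's theorem.

   For the remaining n <= 10, colour the values by a sequence b and weight a permutation
   by a function y of its colour pattern. All colour patterns have fibres of size n!/K, K
   the number of patterns, so the total weight is (n!/K) times the sum T of y over the
   patterns, while the identity above writes it as a sum of ball sums of y. A
   computer-found y makes every ball sum divisible by q^d although (n!/K) T is not; this
   is checked by evaluation. *)

Definition swap_idx (i k : nat) : nat :=
  if k == i then i.+1 else if k == i.+1 then i else k.

Section Ball.
Variable n : nat.
Implicit Types c p : {perm 'I_n}.

Definition adj_tperm (i : nat) : {perm 'I_n} :=
  match insub i, insub i.+1 with
  | Some a, Some b => tperm a b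
  | _, _ => 1%g
  end.

Definition ball_perm (j : nat) : {perm 'I_n} :=
  if j is i.+1 then adj_tperm i else 1%g.

Lemma adj_swapE c i : adj_swap c i = (adj_tperm i * c)%g.
Proof.
rewrite /adj_swap /adj_tperm.
by case: (insub i : option 'I_n) => [a|]; case: (insub i.+1 : option 'I_n) => [b|]; rewrite ?mul1g.
Qed.

Lemma adj_tpermE i (x : 'I_n) : i.+1 < n -> val (adj_tperm i x) = swap_idx i x.
Proof.
move=> hi; rewrite /adj_tperm (insubT (fun k => k < n) (ltnW hi)) (insubT (fun k => k < n) hi).
rewrite /swap_idx; case: tpermP => [->|->|nxi nxi1] /=.
- by rewrite eqxx.
- by rewrite (gtn_eqF (ltnSn i)) eqxx.
- case: eqP => [hx|_]; first by case: nxi; apply: val_inj.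
  by case: eqP => // hx; case: nxi1; apply: val_inj.
Qed.

Lemma ball_permV j : (ball_perm j)^-1%g = ball_perm j.
Proof.
case: j => [|i] /=; first exact: invg1.
rewrite /adj_tperm.
by case: (insub i : option 'I_n) => [a|]; case: (insub i.+1 : option 'I_n) => [b|];
  rewrite ?tpermV ?invg1.
Qed.

Lemma ball_perm_succ j (x : 'I_n) : j < n -> (val (ball_perm j x) == x.+1) = (j == x.+1).
Proof.
case: j => [|i] hj /=; first by rewrite perm1 (ltn_eqF (ltnSn x)).
rewrite adj_tpermE // /swap_idx.
by case: ifP => /eqP hxi; [|case: ifP => /eqP hxi1]; apply/eqP/eqP; lia.
Qed.

Lemma ball_perm_inj j k : j < n -> k < n -> ball_perm j = ball_perm k -> j = k.
Proof.
have succ_inj i l : i.+1 < n -> l < n -> ball_perm i.+1 = ball_perm l -> i.+1 = l.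
  move=> hi hk E; apply/eqP; rewrite eq_sym -(ball_perm_succ (Ordinal (ltnW hi)) hk) -E.
  by rewrite ball_perm_succ.
case: j => [|i] hj hk E; last exact: succ_inj.
by case: k hk E => // k hk E; symmetry; apply: succ_inj.
Qed.

Hypothesis n_gt0 : 0 < n.

Lemma dK_le1P c p : dK_le c p 1 <-> exists2 j, j < n & p = (ball_perm j * c)%g.
Proof.
split.
  case=> [[|i [|k l]]] [] //= => [_ _ <-|_]; first by exists 0; rewrite ?mul1g.
  by rewrite andbT adj_swapE => hi <-; exists i.+1.
case=> [[|i] hj ->]; first by exists [::]; rewrite mul1g.
by exists [:: i]; rewrite /= hj adj_swapE.
Qed.

Variable C : {set {perm 'I_n}}.
Hypothesis C_perfect : perfect_code1 C.

Lemma perfect_code_cover p : \sum_(c in C) \sum_(j < n) (p == ball_perm j * c)%g = 1.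
Proof.
have [c0 [[c0C /dK_le1P [j0 hj0 ->]] c0_uniq]] := C_perfect p.
rewrite (bigD1 c0) //= (bigD1 (Ordinal hj0)) //= eqxx !big1 // => [c /andP [cC ncc0]|j nj0].
  apply: big1 => j _; apply/eqP; rewrite eqb0; apply: contra ncc0 => /eqP Ep.
  by rewrite eq_sym; apply/eqP/c0_uniq; split=> //; apply/dK_le1P; exists j; rewrite -?Ep.
apply/eqP; rewrite eqb0; apply: contra nj0 => /eqP /mulIg /ball_perm_inj E.
by apply/eqP/val_inj; rewrite /= E.
Qed.

Lemma perfect_code_sum (w : {perm 'I_n} -> nat) :
  \sum_p w p = \sum_(c in C) \sum_(j < n) w (ball_perm j * c)%g.
Proof.
transitivity (\sum_p \sum_(c in C) \sum_(j < n) (p == ball_perm j * c)%g * w p).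
  apply: eq_bigr => p _; rewrite -[LHS]mul1n -(perfect_code_cover p) big_distrl.
  by apply: eq_bigr => c _; rewrite big_distrl.
rewrite exchange_big; apply: eq_bigr => c _; rewrite exchange_big; apply: eq_bigr => j _.
by rewrite (bigD1 (ball_perm j * c)%g) //= eqxx mul1n big1 ?addn0 // => p /negbTE ->.
Qed.

End Ball.

Lemma const_of_diag_dominant (T : finType) (N : T -> T -> nat) (x : T -> nat) (r K : nat) :
  (forall t, \sum_s N s t = r) -> (forall t, r < (N t t).*2) ->
  (forall t, \sum_s x s * N s t = K) -> forall s t, x s = x t.
Proof.
move=> colN domN solx u v.
have [t1 _ x_max] := @arg_maxnP T u xpredT x isT.
have [t0 _ x_min] := @arg_minnP T u xpredT x isT.
set M := x t1 in x_max *; set m := x t0 in x_min *.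
have diag_le t : N t t <= r by rewrite -(colN t) (bigD1 t) //= leq_addr.
have offdiag t : K = x t * N t t + \sum_(s | s != t) x s * N s t.
  by rewrite -(solx t) (bigD1 t).
have off_sum t : \sum_(s | s != t) N s t = r - N t t.
  by move: (colN t); rewrite (bigD1 t) //=; lia.
have off_ub t : \sum_(s | s != t) x s * N s t <= M * (r - N t t).
  by rewrite -off_sum big_distrr leq_sum // => s _; exact: leq_mul (x_max s isT) (leqnn _).
have off_lb t : m * (r - N t t) <= \sum_(s | s != t) x s * N s t.
  by rewrite -off_sum big_distrr leq_sum // => s _; exact: leq_mul (x_min s isT) (leqnn _).
have mM : m <= M by apply: x_min.
have Mm : M <= m.
  have := offdiag t1; have := offdiag t0; have := off_ub t0; have := off_lb t1.
  have := diag_le t0; have := diag_le t1; have := domN t0; have := domN t1.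
  rewrite -/M -/m; nia.
have x_eqm w : x w = m by apply/eqP; rewrite eqn_leq x_min // andbT (leq_trans (x_max w isT)).
by rewrite !x_eqm.
Qed.

Lemma sum_ord_eq_le1 n k : \sum_(j < n) (j == k :> nat) <= 1.
Proof.
rewrite (eq_bigr (fun j : 'I_n => if j == k :> nat then 1 else 0)) => [|j _]; last by case: eqP.
by rewrite -big_mkcond /= (big_ord1_eq _ (fun=> 1)); case: ifP.
Qed.

Section PrimeLength.
Variable n : nat.
Hypothesis n_gt4 : 4 < n.
Let n_gt0 : 0 < n. Proof. exact: ltn_trans n_gt4. Qed.
Let z : 'I_n := Ordinal n_gt0.
Implicit Types c p : {perm 'I_n}.
Implicit Types s t : 'I_n.

Definition pos0 p : 'I_n := (p^-1)%g z.

Lemma pos0_ball j c : pos0 (ball_perm n j * c)%g = ball_perm n j (pos0 c).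
Proof. by rewrite /pos0 invMg permM ball_permV. Qed.

Definition move_count s t := \sum_(j < n) (ball_perm n j s == t).

Lemma move_count_col t : \sum_s move_count s t = n.
Proof.
rewrite /move_count exchange_big /= -[RHS]card_ord -sum1_card; apply: eq_bigr => j _.
rewrite (bigD1 ((ball_perm n j)^-1 t)%g) //= permKV eqxx big1 // => s ns.
by apply/eqP; rewrite eqb0; apply: contra ns => /eqP <-; rewrite permK.
Qed.

Lemma move_count_diag t : n <= move_count t t + 2.
Proof.
have fixed (j : 'I_n) : (ball_perm n j t == t) + ((j == t :> nat) + (j == t.+1 :> nat)) >= 1.
  case: j => [[|i] hi]; first by rewrite perm1 eqxx.
  have := adj_tpermE t hi; rewrite /swap_idx /= => E.
  case: eqP => // /eqP; rewrite -val_eqE /= E.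
  by case: ifP => [/eqP->|_]; [|case: ifP => [/eqP->|_]]; rewrite ?eqxx /=; lia.
have := sum_ord_eq_le1 n t; have := sum_ord_eq_le1 n t.+1.
have : n <= \sum_(j < n) ((ball_perm n j t == t) + ((j == t :> nat) + (j == t.+1 :> nat))).
  by rewrite -[X in X <= _]card_ord -sum1_card leq_sum.
by rewrite !big_split /= -/(move_count t t); lia.
Qed.

Lemma sum_pos0 t : \sum_p (pos0 p == t) = (n.-1)`!.
Proof.
have fibre_const u : \sum_p (pos0 p == u) = \sum_p (pos0 p == z).
  rewrite (reindex_inj (mulgI (tperm u z))); apply: eq_bigr => p _.
  by rewrite /pos0 invMg permM tpermV -{2}(tpermR u z) (inj_eq perm_inj).
have sum_fibres : n`! = \sum_(u : 'I_n) \sum_p (pos0 p == u).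
  rewrite exchange_big -card_Sn -sum1_card; apply: eq_bigr => p _.
  by rewrite (bigD1 (pos0 p)) //= eqxx big1 // => u; rewrite eq_sym => /negbTE ->.
have fact_pred : n`! = n * (n.-1)`! by rewrite -[in LHS](prednK n_gt0) factS prednK.
apply/eqP; rewrite fibre_const -(eqn_pmul2l n_gt0) -fact_pred sum_fibres.
by rewrite (eq_bigr _ (fun u _ => fibre_const u)) big_const_ord iter_addn_0 mulnC.
Qed.

Lemma no_perfect_code_prime : prime n -> ~ exists C : {set {perm 'I_n}}, perfect_code1 C.
Proof.
move=> n_prime [C C_perfect].
pose x s := \sum_(c in C | pos0 c == s) 1.
have x_solves t : \sum_s x s * move_count s t = (n.-1)`!.
  rewrite -(sum_pos0 t) (perfect_code_sum n_gt0 C_perfect) (partition_big pos0 xpredT) //=.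
  apply: eq_bigr => s _; rewrite big_distrl; apply: eq_bigr => c /andP [_ /eqP <-].
  by rewrite /= mul1n; apply: eq_bigr => j _; rewrite pos0_ball.
have x_const s : x s = x z.
  apply: (const_of_diag_dominant move_count_col _ x_solves) => t.
  by have := move_count_diag t; lia.
have n_dvd : n %| (n.-1)`!.
  rewrite -(x_solves z) (eq_bigr (fun s => x z * move_count s z)) => [|s _].
    by rewrite -big_distrr move_count_col dvdn_mull.
  by rewrite x_const.
have := Wilson (prime_gt1 n_prime); rewrite n_prime -addn1 dvdn_addr // dvdn1.
by move=> /esym /eqP n1; move: n_gt4; rewrite n1.
Qed.
End PrimeLength.

Definition seq_ball (s : seq nat) (j : nat) : seq nat :=
  if j is i.+1 then mkseq (fun k => nth 0 s (swap_idx i k)) (size s) else s.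

Section Patterns.
Variables (n : nat) (b : seq nat).
Hypothesis size_b : size b = n.
Implicit Types c p q : {perm 'I_n}.

Definition pattern p : seq nat := [seq nth 0 b (p i) | i <- enum 'I_n].

Lemma size_pattern p : size (pattern p) = n.
Proof. by rewrite size_map size_enum_ord. Qed.

Lemma nth_pattern p (i : 'I_n) : nth 0 (pattern p) i = nth 0 b (p i).
Proof. by rewrite (nth_map i) ?size_enum_ord // nth_ord_enum. Qed.

Lemma pattern_ball j c : j < n -> pattern (ball_perm n j * c)%g = seq_ball (pattern c) j.
Proof.
case: j => [|i] hi /=; first by rewrite mul1g.
apply: (@eq_from_nth _ 0); first by rewrite size_mkseq !size_pattern.
move=> k; rewrite size_pattern => hk; rewrite nth_mkseq ?size_pattern //.
by rewrite (nth_pattern _ (Ordinal hk)) -(adj_tpermE (Ordinal hk) hi) nth_pattern permM.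
Qed.

Lemma pattern_eq p q : (pattern p == pattern q) = [forall i, nth 0 b (p i) == nth 0 b (q i)].
Proof.
apply/eqP/forallP => [E i|E]; last by apply/eq_map => i; apply/eqP.
by rewrite -!nth_pattern E.
Qed.

Lemma perm_eq_patternP s : reflect (exists p, pattern p = s) (perm_eq s b).
Proof.
have -> : b = [tuple nth 0 b i | i < n] :> seq nat.
  by rewrite /= (map_comp (nth 0 b) val) val_enum_ord -size_b -/(mkseq _ _) mkseq_nth.
apply: (iffP tuple_permP) => [[p ->]|[p <-]]; exists p; rewrite /pattern /=;
  by apply: eq_map => i; rewrite tnth_mktuple.
Qed.

Definition fibre s := \sum_q (pattern q == s).

Lemma fibre_pattern p : fibre (pattern p) = fibre (pattern 1).
Proof.
rewrite /fibre (reindex_inj (mulgI p)); apply: eq_bigr => q _; congr (nat_of_bool _).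
rewrite !pattern_eq; apply/forallP/forallP => E i.
  by have := E (p^-1 i)%g; rewrite perm1 permM permKV.
by rewrite permM (eqP (E (p i))) perm1.
Qed.

Lemma sum_pattern (g : seq nat -> nat) :
  \sum_p g (pattern p) = fibre (pattern 1) * \sum_(s <- permutations b) g s.
Proof.
have L_uniq := permutations_uniq b.
have pick x : x \in permutations b -> \sum_(s <- permutations b) (x == s) * g s = g x.
  move=> xL; rewrite (big_rem x xL) /= eqxx mul1n big_seq big1 ?addn0 // => s sr.
  by case: eqP sr => [<-|]; rewrite ?mul0n // (mem_rem_uniqF _ L_uniq).
transitivity (\sum_(s <- permutations b) fibre s * g s).
  rewrite (eq_bigr (fun p => \sum_(s <- permutations b) (pattern p == s) * g s)) => [|p _].
    by rewrite exchange_big; apply: eq_bigr => s _; rewrite big_distrl.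
  by rewrite pick // mem_permutations; apply/perm_eq_patternP; exists p.
rewrite big_distrr big_seq [RHS]big_seq; apply: eq_bigr => s.
by rewrite mem_permutations => /perm_eq_patternP [p <-]; rewrite fibre_pattern.
Qed.

Lemma fibre_mul_size : fibre (pattern 1) * size (permutations b) = n`!.
Proof.
by rewrite -card_Sn -sum1_card (sum_pattern (fun=> 1)) sum1_size.
Qed.
End Patterns.

Lemma no_perfect_code_of_weights n (b : seq nat) (y : seq nat -> nat) (q d : nat) :
  0 < n -> size b = n -> prime q ->
  all (fun s => q ^ d %| sumn [seq y (seq_ball s j) | j <- iota 0 n]) (permutations b) ->
  0 < sumn (map y (permutations b)) ->
  logn q n`! + logn q (sumn (map y (permutations b))) < logn q (size (permutations b)) + d ->
  ~ exists C : {set {perm 'I_n}}, perfect_code1 C.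
Proof.
move=> n_gt0 size_b q_prime balls_dvd total_gt0 val_small [C C_perfect].
set T := sumn _ in total_gt0 val_small; set K := size _ in val_small.
have fibre_size := fibre_mul_size size_b.
set F := fibre _ _ _ in fibre_size; rewrite -/K in fibre_size.
have [F_gt0 K_gt0] : 0 < F /\ 0 < K.
  by apply/andP; rewrite -muln_gt0 fibre_size fact_gt0.
have total_dvd : q ^ d %| F * T.
  rewrite /T sumnE big_map -(sum_pattern size_b).
  rewrite (perfect_code_sum n_gt0 C_perfect (fun p => y (pattern b p))).
  apply: dvdn_sum => c _ /=.
  suff -> : \sum_(j < n) y (pattern b (ball_perm n j * c)%g) =
            sumn [seq y (seq_ball (pattern b c) j) | j <- iota 0 n].
    apply: (allP balls_dvd); rewrite mem_permutations.
    by apply/(perm_eq_patternP size_b); exists c.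
  rewrite sumnE big_map -(big_mkord xpredT (fun j => y (pattern b (ball_perm n j * c)%g))).
  rewrite /index_iota subn0; apply: eq_big_seq => j; rewrite mem_iota => /andP [_ hj].
  by rewrite pattern_ball.
move: total_dvd; rewrite pfactor_dvdn // ?muln_gt0 ?F_gt0 // lognM //.
by move: val_small; rewrite -fibre_size lognM //; lia.
Qed.

(* Soundness does not depend on this key, since the lemma above holds for every weight
   function; base-16 digits make it injective on patterns with entries below 16. *)
Definition pattern_key (s : seq nat) : positive :=
  N.succ_pos (foldl (fun k d => k * 16 + N.of_nat d)%N 0%N s).

Definition weight_table (b w : seq nat) : PositiveMap.t nat :=
  foldl (fun m sw => PositiveMap.add (pattern_key sw.1) sw.2 m) (PositiveMap.empty nat)
    (zip (permutations b) w).

Definition table_weight (m : PositiveMap.t nat) (s : seq nat) : nat :=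
  odflt 0 (PositiveMap.find (pattern_key s) m).

(* Certificates found by computer search; [w] lists the weights of the colour patterns in
   the order of [permutations b]. Each table is a separate constant so that [vm_compute]
   builds it only once. *)
Definition b4 : seq nat := [:: 0; 0; 0; 1].
Definition w4 : seq nat := [::
  3; 7; 15; 11].
Definition table4 : PositiveMap.t nat := weight_table b4 w4.

Lemma no_perfect_code4 : ~ exists C : {set {perm 'I_4}}, perfect_code1 C.
Proof.
apply: (@no_perfect_code_of_weights 4 b4 (table_weight table4) 2 4).
all: by vm_compute.
Qed.

Definition b6 : seq nat := [:: 0; 0; 1; 1; 2; 2].
Definition w6 : seq nat := [::
  60; 37; 2; 37; 17; 21; 52; 10; 25; 26; 30; 79; 69; 73; 2; 28; 80; 21; 25; 37; 34; 8; 39; 61;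
  26; 0; 19; 53; 54; 10; 0; 1; 2; 73; 20; 51; 79; 61; 19; 80; 3; 55; 30; 16; 74; 28; 23; 27; 46;
  19; 70; 14; 21; 10; 77; 15; 1; 38; 72; 64; 75; 61; 20; 37; 14; 63; 73; 1; 52; 41; 66; 19; 0;
  1; 2; 46; 65; 15; 79; 70; 1; 80; 3; 10; 65; 0; 46; 77; 6; 1].
Definition table6 : PositiveMap.t nat := weight_table b6 w6.

Lemma no_perfect_code6 : ~ exists C : {set {perm 'I_6}}, perfect_code1 C.
Proof.
apply: (@no_perfect_code_of_weights 6 b6 (table_weight table6) 3 4).
all: by vm_compute.
Qed.

Definition b8 : seq nat := [:: 0; 0; 0; 1; 1; 1; 2; 3].
Definition w8 : seq nat := [::
  231; 176; 140; 214; 81; 74; 59; 47; 228; 92; 119; 33; 75; 88; 153; 230; 131; 183; 199; 246; 2;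
  88; 226; 81; 70; 219; 15; 132; 189; 225; 147; 174; 75; 172; 152; 43; 199; 30; 178; 140; 138;
  190; 198; 89; 41; 159; 10; 10; 109; 10; 56; 132; 163; 154; 210; 223; 4; 181; 192; 175; 89;
  214; 214; 130; 145; 242; 55; 217; 246; 134; 183; 159; 41; 184; 85; 70; 77; 91; 225; 90; 168;
  72; 132; 11; 178; 107; 55; 82; 241; 87; 129; 130; 243; 168; 192; 113; 119; 246; 80; 232; 64;
  106; 56; 111; 127; 143; 238; 246; 199; 248; 18; 204; 201; 234; 240; 73; 46; 255; 52; 63; 10;
  26; 215; 106; 130; 31; 248; 28; 48; 180; 64; 96; 193; 160; 192; 5; 128; 32; 32; 128; 185; 8;
  240; 92; 229; 228; 143; 241; 244; 68; 247; 235; 149; 18; 189; 184; 109; 19; 165; 8; 146; 70;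
  174; 175; 32; 219; 107; 128; 153; 175; 65; 104; 51; 222; 218; 109; 251; 104; 114; 82; 6; 44;
  94; 235; 91; 15; 176; 88; 131; 246; 232; 54; 213; 16; 178; 149; 176; 107; 162; 255; 31; 110;
  130; 68; 205; 160; 195; 239; 54; 78; 247; 185; 59; 122; 241; 120; 131; 39; 99; 172; 216; 6;
  128; 141; 40; 195; 99; 238; 85; 45; 47; 244; 75; 10; 174; 47; 91; 80; 240; 206; 12; 252; 152;
  125; 241; 223; 20; 88; 113; 4; 162; 222; 99; 128; 176; 119; 90; 149; 86; 47; 118; 30; 57; 2;
  194; 253; 138; 202; 126; 174; 196; 204; 167; 184; 208; 239; 198; 234; 42; 126; 106; 54; 27;
  229; 17; 145; 196; 99; 157; 153; 251; 245; 111; 224; 243; 59; 65; 29; 248; 0; 28; 185; 111;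
  230; 214; 248; 202; 127; 226; 131; 51; 231; 251; 249; 143; 18; 40; 190; 170; 189; 85; 151;
  113; 138; 49; 19; 231; 94; 80; 218; 8; 250; 252; 234; 200; 175; 254; 61; 198; 198; 105; 186;
  115; 190; 147; 56; 4; 59; 149; 34; 201; 161; 241; 139; 247; 193; 85; 159; 184; 22; 186; 47;
  130; 50; 27; 49; 107; 41; 26; 2; 146; 157; 1; 219; 120; 167; 250; 161; 80; 5; 148; 3; 101;
  133; 205; 50; 118; 94; 83; 116; 192; 42; 59; 80; 153; 161; 141; 141; 251; 189; 140; 0; 133;
  210; 192; 179; 47; 231; 203; 45; 163; 165; 95; 241; 127; 183; 109; 59; 162; 66; 221; 52; 196;
  193; 124; 103; 131; 2; 223; 120; 1; 117; 17; 13; 199; 27; 49; 50; 113; 173; 139; 163; 73; 111;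
  59; 204; 30; 39; 66; 197; 182; 135; 74; 0; 46; 111; 143; 97; 253; 16; 43; 219; 120; 216; 156;
  125; 200; 130; 130; 255; 144; 221; 230; 249; 179; 111; 180; 115; 2; 219; 207; 69; 94; 188;
  233; 88; 213; 60; 39; 223; 235; 67; 26; 12; 45; 170; 225; 51; 245; 32; 182; 7; 99; 127; 156;
  51; 127; 213; 184; 130; 90; 50; 62; 15; 50; 42; 215; 153; 215; 82; 54; 69; 249; 129; 75; 201;
  52; 156; 18; 9; 182; 154; 52; 109; 54; 153; 157; 232; 243; 224; 111; 167; 140; 189; 69; 13; 1;
  147; 216; 84; 119; 98; 1; 241; 9; 184; 132; 89; 100; 18; 95; 6; 170; 58; 64; 12; 247; 132; 29;
  9; 139; 52; 197; 71; 165; 83; 54; 198; 69; 194; 103; 123; 89; 69; 152; 170; 161; 169; 12; 5;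
  30; 147; 67; 221; 18; 15; 224; 114; 59; 131; 172; 237; 74; 186; 196; 161; 13; 233; 100; 78;
  90; 157; 22; 131; 248; 43; 151; 89; 220; 143; 251; 124; 146; 60; 51; 173; 132; 169; 76; 136;
  1; 224; 223; 101; 239; 229; 56; 230; 14; 226; 31; 146; 107; 204; 185; 230; 206; 91; 238; 16;
  191; 52; 67; 228; 134; 251; 161; 48; 142; 100; 20; 239; 190; 149; 154; 17; 212; 130; 42; 239;
  69; 232; 88; 237; 242; 232; 41; 183; 224; 48; 160; 42; 33; 112; 198; 191; 182; 3; 188; 35;
  148; 206; 123; 210; 95; 176; 138; 205; 228; 251; 64; 133; 221; 221; 203; 17; 162; 94; 236;
  141; 236; 88; 230; 169; 8; 41; 173; 94; 115; 54; 179; 191; 6; 181; 9; 41; 89; 147; 222; 214;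
  239; 232; 157; 81; 125; 122; 158; 141; 238; 96; 187; 88; 48; 56; 2; 234; 183; 210; 45; 181;
  187; 250; 217; 131; 177; 55; 188; 204; 1; 252; 176; 105; 111; 131; 171; 255; 238; 86; 186;
  125; 90; 32; 196; 91; 254; 109; 31; 82; 179; 84; 247; 199; 230; 19; 139; 129; 95; 195; 144;
  22; 65; 240; 169; 103; 197; 130; 76; 59; 16; 20; 79; 198; 200; 240; 196; 8; 143; 112; 169; 95;
  229; 58; 219; 35; 91; 233; 252; 82; 221; 226; 164; 0; 79; 177; 237; 5; 110; 151; 145; 189;
  163; 221; 19; 130; 179; 139; 177; 45; 170; 162; 114; 49; 79; 44; 24; 246; 180; 63; 148; 67;
  59; 83; 247; 101; 11; 64; 90; 188; 216; 177; 17; 71; 241; 148; 109; 67; 167; 224; 110; 212;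
  246; 252; 10; 0; 70; 243; 56; 217; 248; 0; 213; 80; 179; 168; 143; 122; 102; 183; 177; 164;
  245; 17; 125; 195; 243; 113; 13; 11; 58; 148; 180; 47; 232; 36; 175; 245; 27; 141; 64; 72;
  140; 81; 77; 107; 158; 39; 180; 1; 186; 53; 6; 163; 161; 153; 149; 248; 172; 136; 211; 174;
  98; 240; 255; 170; 189; 141; 69; 125; 199; 69; 26; 254; 201; 196; 234; 55; 171; 223; 195; 129;
  47; 105; 135; 77; 203; 203; 245; 135; 240; 0; 9; 246; 150; 165; 250; 163; 199; 52; 159; 14;
  229; 197; 181; 149; 251; 191; 93; 172; 45; 161; 187; 39; 253; 247; 87; 242; 32; 167; 76; 185;
  208; 27; 208; 94; 200; 99; 75; 93; 89; 238; 170; 111; 136; 245; 72; 29; 186; 20; 180; 111;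
  245; 162; 38; 217; 208; 18; 1; 211; 198; 110; 210; 223; 244; 255; 234; 167; 186; 184; 78; 191;
  145; 234; 232; 103; 114; 76; 63; 129; 72; 136; 31; 75; 121; 117; 134; 0; 89; 25; 234; 101;
  252; 119; 3; 65; 172; 91; 186; 144; 187; 211; 18; 137; 164; 212; 134; 5; 237; 33; 238; 120;
  132; 125; 120; 67; 78; 43; 71; 1; 190; 183; 3; 182; 192; 134; 215; 5; 238; 205; 134; 102; 149;
  242; 43; 189; 255; 253; 130; 36; 92; 220; 180; 125; 186; 59; 140; 219; 110; 123; 22; 236; 9;
  166; 0; 155; 132; 231; 2; 127; 254; 0].
Definition table8 : PositiveMap.t nat := weight_table b8 w8.

Lemma no_perfect_code8 : ~ exists C : {set {perm 'I_8}}, perfect_code1 C.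
Proof.
apply: (@no_perfect_code_of_weights 8 b8 (table_weight table8) 2 8).
all: by vm_compute.
Qed.

Definition b9 : seq nat := [:: 0; 0; 0; 0; 0; 1; 1; 2; 2].
Definition w9 : seq nat := [::
  61; 130; 94; 70; 223; 55; 25; 28; 43; 109; 22; 202; 124; 211; 169; 70; 160; 130; 169; 1; 241;
  223; 64; 163; 91; 232; 52; 208; 187; 118; 19; 91; 151; 91; 193; 214; 13; 31; 241; 22; 40; 22;
  100; 121; 109; 16; 52; 1; 172; 103; 238; 172; 22; 199; 25; 100; 16; 1; 223; 214; 19; 37; 151;
  37; 49; 67; 124; 37; 49; 133; 67; 1; 142; 163; 7; 241; 163; 31; 220; 13; 112; 157; 73; 49; 52;
  28; 31; 37; 100; 145; 139; 217; 208; 223; 166; 136; 133; 100; 217; 229; 202; 4; 49; 205; 112;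
  169; 172; 124; 7; 58; 58; 115; 121; 25; 79; 40; 160; 184; 220; 124; 55; 154; 94; 217; 193;
  229; 67; 220; 7; 127; 67; 199; 70; 67; 109; 199; 82; 235; 133; 40; 241; 214; 76; 241; 97; 70;
  31; 145; 133; 52; 118; 175; 13; 202; 220; 43; 235; 187; 238; 13; 154; 52; 94; 19; 28; 187;
  142; 136; 55; 163; 52; 100; 199; 91; 232; 28; 64; 40; 211; 193; 100; 220; 118; 64; 88; 160;
  235; 106; 142; 22; 178; 142; 118; 196; 118; 64; 214; 163; 16; 91; 226; 121; 73; 64; 22; 193;
  172; 13; 130; 40; 106; 202; 88; 145; 52; 145; 136; 7; 133; 184; 46; 40; 73; 142; 52; 82; 82;
  214; 217; 64; 76; 181; 214; 214; 121; 106; 1; 151; 172; 31; 133; 40; 28; 40; 118; 112; 157;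
  172; 118; 187; 190; 7; 31; 151; 31; 238; 178; 40; 211; 94; 211; 226; 157; 94; 10; 205; 58;
  238; 40; 172; 7; 112; 196; 172; 97; 208; 55; 226; 151; 109; 16; 124; 199; 166; 235; 196; 190;
  19; 214; 160; 34; 97; 55; 76; 7; 220; 241; 91; 214; 94; 229; 70; 40; 229; 145; 112; 166; 28;
  241; 91; 85; 118; 64; 25; 115; 106; 220; 97; 115; 139; 157; 61; 139; 223; 172; 49; 28; 82;
  190; 52; 157; 241; 25; 88; 184; 196; 76; 118; 157; 37; 166; 199; 55; 13; 184; 82; 160; 73;
  166; 202; 136; 175; 109; 241; 91; 211; 181; 148; 193; 220; 214; 178; 19; 223; 112; 1; 190;
  106; 115; 151; 19; 154; 187; 7; 88; 85; 229; 61; 142; 238; 16; 61; 61; 241; 97; 208; 232; 241;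
  217; 169; 10; 154; 217; 7; 172; 205; 13; 199; 238; 97; 85; 94; 196; 73; 91; 169; 16; 31; 67;
  160; 205; 142; 31; 187; 241; 181; 7; 118; 175; 190; 139; 133; 154; 67; 1; 58; 238; 229; 118;
  55; 22; 223; 106; 10; 49; 109; 64; 238; 7; 13; 202; 76; 232; 199; 61; 238; 19; 100; 151; 4;
  217; 235; 115; 172; 202; 34; 190; 88; 118; 25; 220; 145; 232; 25; 205; 76; 100; 55; 139; 184;
  217; 157; 202; 13; 13; 238; 85; 115; 211; 187; 232; 169; 121; 25; 133; 241; 220; 52; 115; 52;
  232; 169; 97; 4; 205; 79; 160; 67; 106; 4; 160; 31; 25; 190; 61; 1; 94; 157; 190; 55; 199;
  112; 52; 214; 37; 130; 31; 22; 22; 139; 178; 172; 43; 175; 10; 106; 172; 223; 10; 94; 226; 76;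
  133; 163; 10; 193; 76; 103; 232; 49; 73; 43; 100; 70; 55; 211; 109; 238; 238; 100; 184; 37;
  124; 94; 241; 37; 73; 76; 187; 43; 55; 181; 190; 160; 31; 139; 154; 40; 223; 190; 31; 238; 13;
  133; 136; 151; 229; 163; 25; 49; 31; 163; 145; 28; 55; 118; 97; 88; 52; 193; 172; 175; 172;
  187; 160; 235; 10; 145; 109; 43; 103; 163; 223; 166; 37; 73; 115; 157; 94; 55; 172; 34; 118;
  94; 136; 7; 79; 229; 136; 58; 103; 217; 220; 127; 187; 148; 49; 178; 211; 238; 112; 13; 199;
  136; 88; 118; 181; 214; 142; 91; 37; 1; 163; 13; 100; 118; 61; 220; 25; 52; 67; 1; 184; 154;
  34; 238; 211; 1; 109; 79; 106; 130; 226; 235; 31; 139; 241; 22; 43; 169; 46; 241; 76; 175;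
  181; 133; 235; 79; 154; 241; 25; 88; 91; 151; 52; 112; 214; 64; 136; 169; 208; 172; 88; 109;
  235; 31; 37; 76; 64; 163; 214; 172; 67; 22; 7; 154; 151; 199; 202; 166; 199; 154; 55; 37; 148;
  217; 223; 76; 109; 190; 178; 217; 151; 217; 187; 208; 184; 124; 22; 193; 10; 13; 160; 214; 82;
  220; 199; 211; 121; 199; 31; 175; 160; 139; 1; 10; 61; 13; 7; 202; 118; 160; 61; 115; 37; 1].
Definition table9 : PositiveMap.t nat := weight_table b9 w9.

Lemma no_perfect_code9 : ~ exists C : {set {perm 'I_9}}, perfect_code1 C.
Proof.
apply: (@no_perfect_code_of_weights 9 b9 (table_weight table9) 3 5).
all: by vm_compute.
Qed.

Definition b10 : seq nat := [:: 0; 0; 0; 0; 1; 1; 1; 1; 2; 2].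
Definition w10 : seq nat := [::
  64; 49; 39; 44; 24; 14; 9; 34; 39; 69; 9; 39; 49; 64; 49; 104; 79; 54; 99; 54; 124; 79; 19;
  109; 109; 64; 94; 39; 114; 64; 39; 59; 54; 39; 69; 69; 39; 14; 24; 64; 109; 79; 74; 4; 59; 84;
  54; 4; 54; 24; 59; 39; 84; 39; 109; 69; 114; 114; 99; 89; 59; 29; 69; 119; 39; 124; 9; 54; 44;
  19; 24; 44; 124; 4; 89; 24; 19; 79; 104; 14; 84; 69; 44; 89; 49; 9; 39; 84; 79; 44; 39; 49;
  84; 109; 114; 109; 19; 39; 79; 69; 99; 124; 64; 74; 74; 124; 74; 59; 64; 104; 14; 44; 114; 99;
  29; 34; 54; 89; 9; 19; 19; 109; 69; 59; 49; 74; 104; 59; 119; 104; 94; 14; 74; 89; 89; 104;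
  104; 104; 74; 119; 4; 24; 34; 109; 64; 114; 114; 24; 124; 49; 49; 89; 34; 74; 54; 59; 39; 124;
  39; 124; 39; 99; 34; 34; 99; 124; 94; 14; 4; 124; 49; 79; 124; 44; 4; 104; 34; 89; 29; 89; 34;
  69; 14; 79; 99; 64; 59; 4; 64; 69; 104; 4; 59; 94; 44; 44; 19; 29; 24; 39; 59; 14; 4; 74; 9;
  89; 84; 94; 69; 114; 99; 124; 9; 4; 99; 14; 124; 44; 24; 119; 49; 84; 114; 49; 99; 59; 19; 14;
  24; 4; 104; 89; 39; 39; 94; 74; 99; 84; 79; 39; 64; 89; 19; 44; 4; 64; 49; 49; 94; 124; 104;
  44; 114; 114; 74; 9; 109; 84; 119; 64; 89; 69; 9; 19; 24; 119; 34; 44; 94; 29; 19; 39; 44; 89;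
  39; 44; 49; 99; 39; 19; 124; 79; 119; 54; 44; 69; 99; 54; 104; 114; 54; 19; 24; 104; 124; 79;
  74; 89; 4; 49; 14; 54; 79; 109; 119; 84; 29; 34; 119; 19; 109; 79; 109; 39; 124; 94; 59; 89;
  79; 44; 39; 14; 39; 49; 4; 109; 14; 74; 99; 19; 9; 89; 29; 49; 119; 119; 4; 109; 44; 49; 59;
  104; 124; 24; 124; 39; 124; 44; 114; 69; 84; 74; 109; 9; 109; 84; 124; 24; 119; 54; 9; 44; 29;
  24; 24; 44; 104; 4; 109; 69; 124; 54; 29; 114; 69; 94; 104; 39; 49; 69; 99; 114; 54; 39; 29;
  99; 59; 84; 54; 9; 114; 74; 19; 64; 114; 14; 69; 114; 49; 69; 29; 69; 84; 19; 124; 34; 89; 39;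
  64; 94; 84; 54; 69; 119; 29; 34; 84; 119; 109; 19; 64; 114; 109; 119; 29; 54; 19; 4; 64; 4;
  109; 14; 64; 124; 9; 59; 99; 39; 34; 69; 64; 9; 39; 39; 99; 124; 59; 104; 119; 34; 109; 14;
  124; 24; 19; 124; 109; 114; 104; 4; 99; 49; 34; 124; 99; 114; 119; 124; 119; 44; 39; 79; 59;
  114; 34; 29; 39; 124; 104; 124; 94; 4; 79; 124; 119; 24; 119; 109; 109; 64; 29; 14; 19; 104;
  109; 104; 14; 64; 14; 74; 49; 59; 84; 124; 34; 49; 59; 94; 19; 44; 104; 99; 99; 4; 69; 44; 54;
  24; 109; 24; 124; 34; 109; 119; 4; 59; 104; 29; 99; 34; 119; 84; 39; 19; 19; 59; 29; 84; 14;
  44; 69; 34; 99; 114; 84; 4; 34; 44; 9; 99; 29; 49; 44; 19; 4; 109; 34; 19; 49; 69; 114; 74;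
  89; 59; 64; 14; 114; 44; 34; 14; 69; 44; 94; 44; 59; 99; 124; 109; 19; 24; 49; 84; 49; 19;
  124; 39; 59; 44; 59; 89; 29; 89; 99; 59; 84; 114; 34; 34; 19; 79; 109; 94; 64; 69; 14; 104;
  19; 79; 84; 39; 64; 19; 84; 54; 49; 84; 29; 54; 54; 79; 39; 34; 69; 49; 119; 24; 79; 24; 99;
  44; 114; 99; 114; 124; 114; 4; 39; 74; 79; 99; 64; 99; 54; 54; 114; 4; 124; 29; 34; 114; 14;
  9; 64; 24; 114; 9; 99; 124; 69; 84; 114; 54; 64; 74; 54; 29; 119; 9; 14; 104; 119; 29; 59; 54;
  69; 19; 79; 29; 64; 24; 14; 34; 49; 119; 39; 99; 74; 124; 94; 104; 89; 24; 89; 104; 104; 109;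
  44; 14; 49; 19; 104; 84; 29; 114; 9; 109; 29; 14; 119; 114; 89; 29; 49; 24; 124; 54; 59; 54;
  29; 49; 59; 104; 64; 74; 54; 74; 54; 49; 74; 64; 89; 104; 64; 9; 24; 19; 44; 69; 89; 49; 69;
  39; 54; 119; 9; 119; 114; 24; 114; 14; 64; 74; 54; 49; 109; 34; 109; 54; 64; 64; 39; 109; 64;
  49; 69; 124; 79; 104; 114; 104; 24; 119; 54; 89; 109; 44; 89; 94; 4; 64; 79; 29; 69; 69; 59;
  39; 49; 124; 49; 99; 64; 79; 49; 99; 74; 39; 84; 49; 94; 54; 89; 104; 14; 44; 4; 64; 69; 104;
  64; 19; 49; 109; 89; 4; 104; 64; 109; 94; 9; 24; 64; 84; 119; 94; 54; 94; 24; 64; 19; 9; 109;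
  124; 99; 34; 49; 89; 114; 54; 59; 9; 29; 49; 74; 89; 29; 9; 104; 69; 24; 124; 19; 89; 29; 74;
  24; 14; 114; 59; 104; 124; 69; 114; 19; 79; 79; 79; 119; 4; 84; 44; 9; 64; 64; 59; 119; 39;
  89; 84; 119; 94; 9; 109; 84; 19; 114; 29; 99; 99; 89; 59; 79; 74; 9; 54; 29; 59; 39; 99; 34;
  49; 84; 49; 79; 9; 104; 89; 14; 84; 19; 69; 119; 44; 49; 4; 124; 94; 49; 64; 99; 79; 9; 4; 39;
  124; 9; 84; 4; 109; 39; 94; 39; 49; 34; 4; 79; 74; 29; 89; 64; 44; 14; 24; 94; 119; 99; 19;
  29; 89; 54; 44; 39; 64; 94; 44; 109; 54; 74; 24; 24; 14; 104; 34; 84; 9; 109; 44; 64; 114; 69;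
  69; 14; 94; 14; 29; 59; 109; 74; 14; 104; 64; 34; 94; 84; 19; 84; 59; 114; 114; 79; 14; 124;
  84; 14; 14; 39; 94; 14; 14; 94; 14; 79; 74; 124; 44; 49; 54; 49; 94; 54; 54; 9; 39; 74; 19;
  89; 69; 89; 44; 69; 74; 4; 34; 19; 119; 9; 94; 74; 39; 124; 54; 99; 94; 94; 94; 109; 69; 109;
  59; 89; 29; 99; 34; 89; 84; 99; 94; 89; 84; 49; 44; 89; 109; 29; 29; 49; 119; 19; 4; 109; 114;
  14; 104; 19; 104; 54; 24; 119; 74; 114; 29; 29; 104; 29; 94; 39; 89; 9; 74; 59; 104; 79; 14;
  109; 44; 29; 64; 84; 94; 34; 4; 69; 19; 9; 4; 114; 109; 114; 59; 44; 9; 79; 104; 109; 9; 9;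
  54; 104; 64; 29; 4; 54; 114; 54; 94; 99; 34; 44; 84; 54; 54; 59; 94; 124; 79; 94; 119; 29; 59;
  29; 64; 69; 104; 9; 84; 4; 9; 114; 29; 84; 119; 14; 99; 84; 29; 104; 19; 14; 34; 94; 69; 89;
  94; 99; 19; 114; 29; 94; 29; 14; 94; 59; 79; 19; 109; 84; 74; 34; 59; 109; 74; 4; 99; 84; 44;
  34; 54; 119; 64; 84; 109; 14; 59; 54; 99; 89; 79; 54; 59; 14; 74; 4; 44; 114; 84; 109; 39;
  114; 89; 29; 104; 79; 89; 69; 94; 19; 59; 14; 9; 94; 39; 39; 19; 59; 119; 94; 109; 4; 69; 109;
  54; 79; 54; 114; 69; 24; 24; 59; 39; 4; 49; 29; 39; 84; 14; 49; 39; 54; 79; 64; 19; 119; 4;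
  69; 109; 19; 74; 79; 89; 29; 54; 29; 19; 104; 124; 64; 4; 69; 69; 69; 19; 89; 64; 74; 119; 14;
  89; 74; 49; 39; 104; 79; 94; 39; 49; 109; 99; 49; 34; 109; 79; 114; 84; 4; 94; 84; 99; 59; 44;
  64; 29; 84; 29; 119; 89; 9; 124; 14; 79; 34; 94; 89; 109; 99; 44; 24; 49; 44; 24; 49; 89; 104;
  94; 64; 64; 49; 89; 49; 9; 124; 14; 14; 69; 89; 64; 24; 29; 59; 59; 54; 94; 114; 99; 124; 19;
  114; 64; 44; 79; 109; 84; 4; 14; 49; 114; 19; 49; 84; 59; 64; 79; 24; 74; 64; 4; 39; 24; 34;
  84; 39; 114; 14; 64; 44; 19; 79; 39; 4; 99; 49; 74; 14; 89; 24; 124; 29; 9; 34; 29; 74; 29;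
  44; 109; 104; 49; 109; 54; 119; 44; 99; 84; 114; 109; 69; 14; 69; 19; 109; 69; 54; 4; 49; 74;
  79; 49; 29; 9; 64; 124; 79; 9; 79; 54; 64; 74; 49; 69; 64; 39; 59; 124; 84; 39; 69; 9; 24;
  119; 64; 39; 19; 109; 99; 29; 74; 74; 24; 14; 124; 69; 59; 54; 99; 69; 104; 19; 74; 64; 34;
  64; 9; 29; 4; 104; 24; 19; 49; 69; 9; 109; 34; 44; 64; 124; 69; 24; 39; 84; 34; 99; 74; 99;
  44; 24; 9; 39; 99; 49; 124; 84; 54; 9; 14; 49; 4; 94; 84; 69; 104; 79; 99; 4; 104; 59; 104;
  34; 64; 4; 9; 59; 29; 9; 94; 14; 54; 34; 59; 79; 84; 104; 84; 114; 104; 99; 109; 79; 9; 9; 54;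
  104; 89; 64; 34; 34; 84; 39; 124; 49; 64; 64; 104; 14; 59; 124; 89; 104; 119; 59; 44; 104; 24;
  19; 89; 64; 39; 104; 84; 89; 89; 29; 14; 64; 79; 124; 124; 59; 124; 14; 89; 49; 94; 9; 29; 9;
  14; 109; 44; 24; 114; 124; 79; 124; 84; 124; 49; 74; 54; 19; 104; 49; 99; 119; 49; 114; 19;
  114; 49; 74; 49; 79; 14; 9; 14; 29; 114; 114; 19; 84; 14; 104; 64; 74; 49; 74; 74; 99; 79; 74;
  119; 69; 114; 59; 9; 44; 49; 14; 94; 34; 89; 89; 64; 34; 124; 39; 19; 54; 124; 54; 59; 9; 19;
  9; 24; 14; 69; 119; 54; 119; 119; 104; 9; 4; 64; 94; 74; 4; 84; 49; 84; 54; 19; 119; 34; 44;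
  109; 29; 29; 94; 39; 99; 4; 39; 74; 54; 29; 44; 64; 19; 9; 114; 124; 14; 124; 119; 104; 14;
  69; 29; 84; 94; 124; 29; 44; 69; 124; 84; 39; 24; 9; 9; 124; 119; 49; 109; 89; 114; 104; 124;
  4; 84; 19; 54; 29; 19; 69; 64; 99; 19; 69; 64; 34; 124; 4; 79; 34; 29; 89; 39; 39; 64; 74; 29;
  54; 59; 119; 124; 119; 69; 54; 14; 114; 104; 59; 104; 24; 49; 109; 69; 29; 124; 74; 14; 94;
  124; 109; 39; 4; 114; 49; 34; 19; 74; 4; 39; 69; 4; 9; 109; 124; 119; 54; 54; 4; 104; 34; 34;
  104; 54; 119; 34; 54; 119; 44; 19; 74; 119; 79; 119; 44; 89; 109; 114; 104; 24; 119; 14; 64;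
  69; 89; 84; 59; 109; 69; 79; 59; 39; 124; 109; 39; 34; 104; 9; 64; 14; 94; 119; 99; 14; 24;
  14; 99; 59; 124; 34; 9; 19; 104; 64; 54; 114; 89; 4; 104; 69; 29; 84; 49; 94; 84; 29; 124; 14;
  4; 89; 59; 49; 94; 69; 99; 79; 84; 94; 124; 84; 24; 99; 24; 64; 44; 59; 44; 79; 79; 79; 24;
  24; 124; 74; 114; 9; 59; 34; 14; 104; 19; 114; 124; 24; 74; 34; 39; 29; 24; 99; 39; 89; 14; 4;
  79; 54; 24; 79; 64; 119; 19; 24; 114; 79; 54; 34; 119; 29; 79; 109; 99; 114; 84; 94; 89; 94;
  54; 74; 114; 54; 124; 64; 124; 59; 24; 54; 24; 79; 69; 79; 104; 89; 94; 34; 99; 84; 79; 39;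
  84; 89; 49; 114; 109; 84; 64; 54; 84; 19; 49; 99; 34; 79; 29; 84; 34; 24; 14; 44; 14; 114;
  124; 4; 44; 89; 44; 79; 29; 74; 9; 54; 19; 19; 84; 69; 124; 119; 14; 109; 4; 59; 54; 64; 39;
  74; 74; 49; 64; 94; 59; 69; 109; 99; 114; 104; 109; 99; 49; 119; 99; 124; 94; 19; 79; 34; 29;
  24; 89; 124; 39; 69; 59; 39; 119; 49; 19; 49; 79; 9; 9; 79; 64; 119; 74; 104; 39; 44; 49; 104;
  29; 99; 59; 89; 4; 34; 49; 64; 29; 124; 19; 89; 54; 34; 19; 104; 4; 24; 54; 109; 79; 59; 59;
  34; 79; 34; 89; 44; 59; 104; 74; 9; 69; 4; 54; 104; 64; 14; 29; 114; 34; 59; 124; 89; 84; 4;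
  54; 79; 24; 109; 49; 124; 119; 54; 79; 109; 64; 69; 109; 94; 34; 54; 14; 9; 39; 39; 34; 74;
  64; 54; 4; 44; 99; 49; 9; 74; 24; 64; 124; 19; 14; 34; 79; 74; 114; 104; 124; 99; 4; 124; 99;
  54; 109; 44; 79; 94; 124; 89; 39; 99; 49; 69; 44; 99; 99; 44; 84; 104; 109; 119; 69; 74; 59;
  19; 59; 79; 24; 59; 89; 124; 124; 64; 49; 44; 84; 69; 54; 84; 44; 14; 54; 79; 4; 109; 89; 74;
  99; 89; 4; 24; 64; 54; 84; 74; 84; 19; 109; 69; 44; 39; 94; 9; 89; 109; 109; 64; 104; 74; 64;
  54; 14; 99; 4; 124; 79; 49; 14; 124; 99; 14; 44; 4; 109; 119; 94; 114; 24; 79; 24; 39; 34;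
  109; 59; 59; 34; 24; 104; 29; 69; 64; 59; 64; 124; 104; 119; 14; 29; 114; 59; 44; 34; 119; 29;
  114; 109; 94; 14; 59; 59; 84; 14; 79; 19; 14; 49; 119; 99; 99; 4; 94; 29; 94; 44; 34; 74; 109;
  4; 9; 39; 84; 109; 99; 94; 94; 9; 124; 59; 54; 29; 19; 44; 39; 94; 119; 4; 29; 34; 9; 59; 14;
  114; 44; 4; 34; 49; 119; 124; 49; 124; 49; 104; 119; 74; 9; 79; 34; 109; 69; 49; 74; 29; 14;
  114; 9; 124; 14; 54; 109; 14; 34; 74; 84; 4; 99; 9; 104; 39; 114; 34; 34; 4; 84; 84; 59; 104;
  109; 9; 79; 4; 34; 54; 19; 124; 99; 39; 124; 114; 39; 34; 49; 84; 74; 39; 119; 114; 54; 99;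
  79; 89; 94; 89; 24; 4; 74; 69; 14; 54; 119; 14; 14; 29; 119; 74; 74; 34; 64; 124; 79; 84; 119;
  99; 9; 84; 59; 114; 59; 4; 9; 119; 64; 54; 24; 44; 74; 69; 109; 9; 89; 44; 94; 99; 74; 99; 84;
  124; 89; 89; 104; 64; 119; 89; 74; 39; 24; 64; 14; 109; 54; 64; 44; 94; 69; 104; 54; 124; 94;
  64; 59; 119; 44; 124; 124; 84; 119; 9; 9; 119; 79; 84; 24; 69; 84; 9; 44; 124; 29; 19; 119;
  79; 44; 54; 39; 49; 84; 9; 49; 104; 59; 124; 99; 44; 59; 59; 29; 34; 89; 19; 119; 29; 89; 84;
  69; 104; 9; 104; 119; 29; 14; 64; 14; 74; 39; 79; 29; 109; 94; 114; 69; 69; 29; 59; 104; 124;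
  54; 4; 39; 114; 119; 49; 39; 44; 84; 114; 69; 94; 109; 24; 44; 94; 34; 4; 74; 29; 24; 124; 54;
  19; 64; 59; 24; 39; 114; 94; 19; 84; 49; 84; 14; 119; 39; 4; 79; 24; 39; 79; 44; 59; 14; 104;
  109; 19; 9; 79; 44; 114; 44; 89; 34; 14; 34; 124; 49; 34; 64; 94; 29; 4; 94; 69; 89; 84; 99;
  59; 94; 49; 14; 119; 4; 104; 4; 89; 99; 54; 89; 19; 34; 99; 54; 79; 9; 54; 89; 99; 39; 114;
  84; 59; 99; 44; 94; 104; 124; 49; 109; 49; 94; 9; 39; 9; 94; 44; 14; 4; 64; 14; 49; 9; 119;
  14; 54; 89; 29; 4; 49; 49; 79; 19; 29; 44; 64; 59; 79; 74; 9; 59; 84; 99; 9; 99; 64; 39; 124;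
  114; 124; 94; 59; 109; 29; 19; 89; 19; 109; 24; 99; 104; 124; 109; 124; 109; 84; 14; 84; 74;
  49; 124; 29; 94; 49; 99; 4; 34; 94; 94; 119; 49; 109; 44; 29; 79; 29; 64; 44; 84; 9; 34; 99;
  109; 4; 4; 64; 59; 64; 109; 74; 29; 19; 84; 84; 84; 9; 19; 14; 79; 79; 4; 24; 109; 89; 49; 14;
  64; 94; 104; 114; 59; 119; 124; 79; 69; 99; 19; 104; 84; 19; 114; 14; 9; 19; 59; 94; 49; 94;
  114; 69; 99; 69; 29; 39; 14; 4; 24; 64; 79; 119; 119; 19; 34; 89; 24; 24; 14; 4; 74; 14; 34;
  89; 29; 9; 94; 109; 119; 84; 34; 109; 84; 64; 84; 99; 44; 19; 79; 109; 79; 34; 44; 24; 4; 59;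
  24; 119; 24; 119; 99; 79; 114; 54; 79; 114; 49; 84; 89; 14; 79; 104; 124; 79; 34; 64; 19; 119;
  74; 49; 14; 119; 119; 49; 34; 59; 74; 124; 9; 59; 19; 79; 19; 104; 124; 94; 44; 64; 44; 114;
  109; 4; 119; 69; 74; 39; 34; 14; 34; 29; 14; 19; 24; 104; 9; 39; 29; 49; 119; 4; 44; 19; 24;
  119; 34; 19; 89; 104; 104; 19; 44; 109; 19; 94; 119; 89; 104; 9; 14; 94; 24; 99; 64; 54; 54;
  99; 84; 84; 59; 49; 109; 104; 49; 29; 44; 44; 109; 114; 114; 109; 59; 19; 29; 119; 59; 109;
  34; 74; 14; 39; 109; 79; 4; 4; 79; 89; 54; 19; 124; 94; 89; 84; 104; 49; 114; 124; 64; 119;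
  59; 19; 84; 109; 84; 9; 124; 39; 69; 29; 44; 34; 104; 64; 34; 44; 34; 84; 69; 34; 14; 9; 64;
  54; 24; 29; 79; 59; 59; 99; 9; 104; 84; 124; 79; 29; 39; 89; 104; 59; 4; 54; 54; 114; 84; 54;
  14; 94; 79; 14; 14; 24; 109; 34; 9; 114; 49; 119; 59; 14; 109; 4; 39; 34; 49; 9; 39; 39; 119;
  79; 104; 114; 19; 49; 59; 49; 64; 4; 74; 54; 24; 44; 59; 99; 124; 34; 89; 104; 84; 119; 64;
  64; 44; 99; 89; 79; 119; 69; 9; 114; 54; 54; 49; 29; 94; 9; 34; 74; 69; 34; 49; 89; 49; 74;
  34; 44; 24; 59; 84; 114; 49; 79; 99; 99; 14; 44; 114; 94; 99; 54; 39; 59; 104; 124; 109; 69;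
  54; 59; 119; 109; 24; 94; 14; 94; 69; 89; 104; 9; 34; 79; 44; 114; 124; 89; 4; 19; 124; 64;
  14; 49; 24; 54; 69; 44; 64; 4; 19; 114; 114; 74; 19; 79; 24; 49; 39; 124; 94; 44; 54; 89; 24;
  104; 39; 19; 24; 74; 9; 9; 44; 94; 54; 69; 19; 14; 54; 39; 29; 24; 24; 14; 29; 94; 29; 4; 59;
  69; 9; 64; 29; 49; 89; 89; 34; 4; 54; 79; 29; 99; 14; 59; 104; 59; 104; 89; 29; 39; 9; 44;
  114; 44; 89; 79; 74; 54; 54; 49; 69; 74; 14; 99; 29; 29; 4; 104; 84; 59; 19; 9; 69; 69; 44;
  39; 19; 124; 4; 124; 124; 49; 54; 54; 114; 39; 99; 94; 79; 69; 44; 4; 34; 54; 119; 94; 44; 19;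
  79; 104; 34; 119; 54; 99].
Definition table10 : PositiveMap.t nat := weight_table b10 w10.

Lemma no_perfect_code10 : ~ exists C : {set {perm 'I_10}}, perfect_code1 C.
Proof.
apply: (@no_perfect_code_of_weights 10 b10 (table_weight table10) 5 3).
all: by vm_compute.
Qed.
Theorem theorem2 (n : nat) :
  ((4 < n /\ prime n) \/ (4 <= n <= 10)) ->
  ~ exists C : {set {perm 'I_n}}, perfect_code1 C.
Proof.
case=> [[n_gt4 n_prime]|/andP [n_ge4 n_le10]]; first exact: no_perfect_code_prime.
case: n n_ge4 n_le10 => [|[|[|[|[|[|[|[|[|[|[|n]]]]]]]]]]] // _ _.
- exact: no_perfect_code4.
- exact: no_perfect_code_prime.
- exact: no_perfect_code6.
- exact: no_perfect_code_prime.
- exact: no_perfect_code8.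
- exact: no_perfect_code9.
- exact: no_perfect_code10.
Qed.
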